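(* Let $k$ be a positive integer and $p$ a prime. Then: (1) every integer of the form $p_1^{2p^k-1}$ with $p_1$ prime is $p^k$-$T_0T^\ast$-perfect; (2) if $k\ge 2$ and $p$ is odd, then every integer of the form $p_1^{(p^{a_1}-1)/2}\cdot p_2^{(p^{a_2}-1)/2}$, where $p_1\neq p_2$ are primes and $a_1,a_2$ are positive integers with $a_1+a_2=k$, is $p^k$-$T_0T^\ast$-perfect; (3) every integer $n>1$ that is $p^k$-$T_0T^\ast$-perfect is either of the form $p_1^{2p^k-1}$ with $p_1$ prime, or (with $p$ odd) of the form $p_1^{(p^{a_1}-1)/2}\cdot p_2^{(p^{a_2}-1)/2}$ with distinct primes $p_1,p_2$ and positive integers $a_1,a_2$ with $a_1+a_2=k$.
   Context: For a positive integer $m$, $T(m)$ denotes the product of all positive divisors of $m$, and $T^\ast(m)$ the product of all unitary divisors of $m$ (divisors $d$ with $\gcd(d,m/d)=1$). For an integer $K\ge 2$, an integer $n>1$ is called $K$-$T_0T^\ast$-perfect if $T(T^\ast(n))=n^K$. *)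

From mathcomp Require Import all_boot.

Definition Tdiv (m : nat) : nat := \prod_(d <- divisors m) d.

Definition Tunit (m : nat) : nat :=
  \prod_(d <- divisors m | coprime d (m %/ d)) d.

Definition KT0Tstar_perfect (K n : nat) : Prop :=
  2 <= K /\ 1 < n /\ Tdiv (Tunit n) = n ^ K.

(* Pairing each divisor d of n with n/d gives T(n)^2 = n^tau(n), and likewise
   T*(n)^2 = n^u(n), where u(n) counts unitary divisors.  Both counts are
   multiplicative: tau(n) = prod_q (e_q + 1) and u(n) = 2^omega(n).  Hence, with
   c = 2^(omega(n) - 1), T*(n) = n^c and T(T*(n))^2 = n^(c * prod_q (c e_q + 1)),
   so n is K-T0T*-perfect iff c * prod_q (c e_q + 1) = 2K.  For K = p^k, three or
   more prime factors would make 4 divide 2 p^k (so p = 2) while leaving an odd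
   factor > 1 of 2 p^k; one prime factor forces e = 2K - 1, and two force
   (2 e_1 + 1)(2 e_2 + 1) = p^k, i.e. both factors are powers of an odd p. *)

From mathcomp Require Import all_boot.
From mathcomp Require Import zify.

Set Implicit Arguments.
Unset Strict Implicit.
Unset Printing Implicit Defensive.

Lemma divn_divK n d : 0 < n -> d %| n -> n %/ (n %/ d) = d.
Proof. by move=> n_gt0 dv_d_n; rewrite divnA // mulKn. Qed.

Lemma perm_divisors_div n :
  0 < n -> perm_eq [seq n %/ d | d <- divisors n] (divisors n).
Proof.
move=> n_gt0; apply: uniq_perm => [||d].
- rewrite map_inj_in_uniq ?divisors_uniq // => d1 d2.
  rewrite -!dvdn_divisors // => dv1 dv2 eq_div.
  by rewrite -(divn_divK n_gt0 dv1) eq_div divn_divK.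
- exact: divisors_uniq.
rewrite -dvdn_divisors //; apply/mapP/idP => [[d' dv_d' ->] | dv_d].
  by rewrite dvdn_div // dvdn_divisors.
by exists (n %/ d); rewrite ?divn_divK // -dvdn_divisors // dvdn_div.
Qed.

Lemma prod_divisors_sqr n (P : pred nat) : 0 < n ->
  {in divisors n, forall d, P (n %/ d) = P d} ->
  (\prod_(d <- divisors n | P d) d) ^ 2 = n ^ count P (divisors n).
Proof.
move=> n_gt0 P_div.
have prod_div : \prod_(d <- divisors n | P d) d = \prod_(d <- divisors n | P d) (n %/ d).
  rewrite -[in LHS](perm_big _ (perm_divisors_div n_gt0)) big_map.
  rewrite big_seq_cond [RHS]big_seq_cond; apply: eq_bigl => d.
  by case: (boolP (d \in _)) => //= /P_div ->.
rewrite -mulnn {2}prod_div -big_split big_seq_cond /=.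
rewrite (eq_bigr (fun=> n)) => [|d /andP[dv _]]; last first.
  by rewrite mulnC divnK // dvdn_divisors.
by rewrite -big_seq_cond big_const_seq iter_muln muln1.
Qed.

Lemma gcdn_mul_coprime a b d :
  coprime a b -> d %| a * b -> gcdn d a * gcdn d b = d.
Proof.
move=> co_ab dv_d; apply/eqP; rewrite eqn_dvd; apply/andP; split.
  rewrite Gauss_dvd ?dvdn_gcdl //.
  exact: coprime_dvdl (dvdn_gcdr d a) (coprime_dvdr (dvdn_gcdr d b) co_ab).
by rewrite muln_gcdl [a * _]muln_gcdr !dvdn_gcd dvdn_mulr // dvdn_mull // dv_d.
Qed.

Lemma gcdn_divisor_mull a b d1 d2 :
  coprime a b -> d1 %| a -> d2 %| b -> gcdn (d1 * d2) a = d1.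
Proof.
move=> co_ab dv1 dv2; rewrite gcdnC Gauss_gcdl; first exact/gcdn_idPr.
exact: coprime_dvdr dv2 co_ab.
Qed.

Lemma gcdn_divisor_mulr a b d1 d2 :
  coprime a b -> d1 %| a -> d2 %| b -> gcdn (d1 * d2) b = d2.
Proof. by rewrite coprime_sym mulnC => co_ba dv1 dv2; apply: gcdn_divisor_mull co_ba dv2 dv1. Qed.

Lemma divisorsM a b : 0 < a -> 0 < b -> coprime a b ->
  perm_eq (divisors (a * b)) [seq d1 * d2 | d1 <- divisors a, d2 <- divisors b].
Proof.
move=> a_gt0 b_gt0 co_ab; have ab_gt0 : 0 < a * b by rewrite muln_gt0 a_gt0.
apply: uniq_perm => [||d]; first exact: divisors_uniq.
  apply: allpairs_uniq; rewrite ?divisors_uniq //.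
  move=> ? ? /allpairsP[[x1 x2] /= [dv1 dv2 ->]] /allpairsP[[y1 y2] /= [ev1 ev2 ->]] /= eq_d.
  move: dv1 dv2 ev1 ev2; rewrite -!dvdn_divisors // => dv1 dv2 ev1 ev2.
  congr pair.
    by rewrite -(gcdn_divisor_mull co_ab dv1 dv2) eq_d (gcdn_divisor_mull co_ab ev1 ev2).
  by rewrite -(gcdn_divisor_mulr co_ab dv1 dv2) eq_d (gcdn_divisor_mulr co_ab ev1 ev2).
rewrite -dvdn_divisors //; apply/idP/allpairsP => [dv_d | [[d1 d2] /= [+ + ->]]].
  exists (gcdn d a, gcdn d b); rewrite -!dvdn_divisors ?dvdn_gcdr //.
  by rewrite gcdn_mul_coprime.
by rewrite -!dvdn_divisors // => dv1 dv2; apply: dvdn_mul.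
Qed.

Lemma count_divisorsM a b (P Pa Pb : pred nat) : 0 < a -> 0 < b -> coprime a b ->
  {in divisors a & divisors b, forall d1 d2, P (d1 * d2) = Pa d1 && Pb d2} ->
  count P (divisors (a * b)) = count Pa (divisors a) * count Pb (divisors b).
Proof.
move=> a_gt0 b_gt0 co_ab P_mul.
rewrite (permP (divisorsM a_gt0 b_gt0 co_ab)) -!sum1_count big_mkcond big_allpairs_dep.
rewrite [X in X * _]big_mkcond [X in _ * X]big_mkcond big_distrl /=.
apply: eq_big_seq => d1 dv1; rewrite big_distrr /=; apply: eq_big_seq => d2 dv2.
by rewrite P_mul //; case: (Pa d1); case: (Pb d2).
Qed.

Definition multiplicative (f : nat -> nat) : Prop :=
  forall a b, 0 < a -> 0 < b -> coprime a b -> f (a * b) = f a * f b.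

Lemma multiplicative_prod f (s : seq nat) (e : nat -> nat) :
  multiplicative f -> f 1 = 1 -> uniq s -> all prime s ->
  f (\prod_(q <- s) q ^ e q) = \prod_(q <- s) f (q ^ e q).
Proof.
move=> fM f1; elim: s => [|q s IHs] /=; first by rewrite !big_nil.
case/andP=> q_notin_s uniq_s /andP[q_pr s_pr]; rewrite !big_cons -IHs //.
apply: fM; first by rewrite expn_gt0 prime_gt0.
  by rewrite big_seq prodn_cond_gt0 // => r /(allP s_pr) r_pr; rewrite expn_gt0 prime_gt0.
rewrite big_seq; apply: (big_ind (coprime _)) => [|x y|r r_s]; first exact: coprimen1.
  by rewrite coprimeMr => -> ->.
have r_pr : prime r := allP s_pr r r_s.
apply/coprimeXl/coprimeXr; rewrite prime_coprime // dvdn_prime2 //.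
by apply: contraNneq q_notin_s => ->.
Qed.

Lemma prod_primes_logn n : 0 < n -> n = \prod_(q <- primes n) q ^ logn q n.
Proof. by move=> n_gt0; rewrite {1}(prod_prime_decomp n_gt0) prime_decompE big_map. Qed.

Lemma multiplicativeE f n : multiplicative f -> f 1 = 1 -> 0 < n ->
  f n = \prod_(q <- primes n) f (q ^ logn q n).
Proof.
move=> fM f1 n_gt0; rewrite {1}(prod_primes_logn n_gt0) multiplicative_prod //.
  exact: primes_uniq.
exact: all_prime_primes.
Qed.

Lemma divisors_pfactor q e : prime q ->
  perm_eq (divisors (q ^ e)) [seq q ^ i | i <- iota 0 e.+1].
Proof.
move=> q_pr; have qe_gt0 : 0 < q ^ e by rewrite expn_gt0 prime_gt0.
apply: uniq_perm => [||d]; first exact: divisors_uniq.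
  by rewrite map_inj_uniq ?iota_uniq //; apply: expnI (prime_gt1 q_pr).
rewrite -dvdn_divisors //; apply/(dvdn_pfactor _ _ q_pr)/mapP.
  by case=> i le_ie ->; exists i; rewrite // mem_iota.
by case=> i; rewrite mem_iota ltnS => le_ie ->; exists i.
Qed.

Lemma size_divisors_pfactor q e : prime q -> size (divisors (q ^ e)) = e.+1.
Proof. by move/(divisors_pfactor e)/perm_size->; rewrite size_map size_iota. Qed.

Lemma multiplicative_size_divisors : multiplicative (fun n => size (divisors n)).
Proof.
by move=> a b a_gt0 b_gt0 co_ab; rewrite (perm_size (divisorsM a_gt0 b_gt0 co_ab)) size_allpairs.
Qed.

Lemma size_divisors n : 0 < n -> size (divisors n) = \prod_(q <- primes n) (logn q n).+1.
Proof.
move=> n_gt0; rewrite (multiplicativeE multiplicative_size_divisors) // big_seq.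
by rewrite [RHS]big_seq; apply: eq_bigr => q; rewrite mem_primes => /andP[/size_divisors_pfactor->].
Qed.

Definition unitary (n d : nat) : bool := coprime d (n %/ d).

Lemma unitary_div n d : 0 < n -> d %| n -> unitary n (n %/ d) = unitary n d.
Proof. by move=> n_gt0 dv_d; rewrite /unitary divn_divK // coprime_sym. Qed.

Lemma unitaryM a b d1 d2 : 0 < a -> 0 < b -> coprime a b -> d1 %| a -> d2 %| b ->
  unitary (a * b) (d1 * d2) = unitary a d1 && unitary b d2.
Proof.
move=> a_gt0 b_gt0 co_ab dv1 dv2.
have [d1_gt0 d2_gt0] := (dvdn_gt0 a_gt0 dv1, dvdn_gt0 b_gt0 dv2).
move: co_ab; case/dvdnP: dv1 => a' ->; case/dvdnP: dv2 => b' ->.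
rewrite /unitary mulnACA !mulnK ?muln_gt0 ?d1_gt0 //.
rewrite coprimeMl !coprimeMr => /andP[/andP[_ co_a'd2] /andP[co_d1b' _]].
by rewrite !coprimeMl co_d1b' (coprime_sym d2) co_a'd2 andbT.
Qed.

Lemma unitary_pfactor q e i : prime q -> i <= e ->
  unitary (q ^ e) (q ^ i) = (i == 0) || (i == e).
Proof.
move=> q_pr le_ie; rewrite /unitary -expnB ?prime_gt0 //.
case: i le_ie => [|i] le_ie; first by rewrite coprime1n.
rewrite coprime_pexpl //; case: (ltngtP i.+1 e) => [lt_ie | lt_ei | <-].
- by rewrite coprime_pexpr ?subn_gt0 // /coprime gcdnn (gtn_eqF (prime_gt1 q_pr)).
- by rewrite ltnNge le_ie in lt_ei.
by rewrite subnn coprimen1.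
Qed.

Lemma count_unitary_pfactor q e : prime q -> 0 < e ->
  count (unitary (q ^ e)) (divisors (q ^ e)) = 2.
Proof.
move=> q_pr e_gt0; rewrite (permP (divisors_pfactor e q_pr)) count_map.
rewrite (eq_in_count (a2 := predU (pred1 0) (pred1 e))); last first.
  by move=> i; rewrite mem_iota ltnS => le_ie; rewrite /preim /= unitary_pfactor.
have disjoint_0e : count (predI (pred1 0) (pred1 e)) (iota 0 e.+1) = 0.
  rewrite (eq_count (a2 := pred0)) ?count_pred0 // => i /=.
  by apply/negbTE/andP => -[/eqP-> /eqP e0]; rewrite -e0 in e_gt0.
have := count_predUI (pred1 0) (pred1 e) (iota 0 e.+1); rewrite disjoint_0e addn0 => ->.
by rewrite !count_uniq_mem ?iota_uniq // !mem_iota /= add0n ltnSn.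
Qed.

Lemma multiplicative_count_unitary :
  multiplicative (fun n => count (unitary n) (divisors n)).
Proof.
move=> a b a_gt0 b_gt0 co_ab; apply: count_divisorsM => // d1 d2.
by rewrite -!dvdn_divisors // => dv1 dv2; apply: unitaryM.
Qed.

Lemma count_unitary n : 0 < n -> count (unitary n) (divisors n) = 2 ^ size (primes n).
Proof.
move=> n_gt0; rewrite (multiplicativeE multiplicative_count_unitary) // big_seq.
rewrite (eq_bigr (fun=> 2)) => [|q]; first by rewrite -big_seq big_const_seq count_predT iter_muln muln1.
move=> q_n; rewrite count_unitary_pfactor ?logn_gt0 //.
by move: q_n; rewrite mem_primes => /andP[].
Qed.

Lemma Tunit_sqr n : 0 < n -> Tunit n ^ 2 = n ^ 2 ^ size (primes n).
Proof.
move=> n_gt0; rewrite -count_unitary //; apply: prod_divisors_sqr => // d.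
by rewrite -dvdn_divisors // => /(unitary_div n_gt0).
Qed.

Lemma Tdiv_sqr n : 0 < n -> Tdiv n ^ 2 = n ^ \prod_(q <- primes n) (logn q n).+1.
Proof.
move=> n_gt0; rewrite -size_divisors // -count_predT.
exact: (prod_divisors_sqr (P := predT) n_gt0).
Qed.

Lemma size_primes_gt0 n : 1 < n -> 0 < size (primes n).
Proof.
move=> n_gt1; have := prod_primes_logn (ltnW n_gt1).
case: (primes n) => [|//]; rewrite big_nil => n1.
by move: n_gt1; rewrite n1.
Qed.

Definition Tunit_exponent n := 2 ^ (size (primes n)).-1.

Definition T0Tstar_exponent n :=
  Tunit_exponent n * \prod_(q <- primes n) (Tunit_exponent n * logn q n).+1.

Lemma TunitE n : 1 < n -> Tunit n = n ^ Tunit_exponent n.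
Proof.
move=> n_gt1; apply: (@expIn 2 isT); rewrite Tunit_sqr; last exact: ltnW.
by rewrite -expnM /Tunit_exponent -expnSr prednK ?size_primes_gt0.
Qed.

Lemma Tdiv_Tunit_sqr n : 1 < n -> Tdiv (Tunit n) ^ 2 = n ^ T0Tstar_exponent n.
Proof.
move=> n_gt1; have c_gt0 : 0 < Tunit_exponent n by rewrite expn_gt0.
rewrite TunitE // Tdiv_sqr; last by rewrite expn_gt0 ltnW.
rewrite primesX // -expnM.
by congr (_ ^ (_ * _)); apply: eq_bigr => q _; rewrite lognX.
Qed.

Lemma eqn_Tdiv_Tunit_expn K n : 1 < n ->
  (Tdiv (Tunit n) == n ^ K) = (T0Tstar_exponent n == K * 2).
Proof.
by move=> n_gt1; rewrite -eqn_sqr Tdiv_Tunit_sqr // -expnM eqn_exp2l.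
Qed.

Lemma T0Tstar_exponent_pfactor q e : prime q -> 0 < e ->
  T0Tstar_exponent (q ^ e) = e.+1.
Proof.
move=> q_pr e_gt0.
by rewrite /T0Tstar_exponent /Tunit_exponent primesX // primes_prime // big_seq1 pfactorK // !mul1n.
Qed.

Lemma T0Tstar_exponent_pfactor2 q1 q2 e1 e2 :
  prime q1 -> prime q2 -> q1 != q2 -> 0 < e1 -> 0 < e2 ->
  T0Tstar_exponent (q1 ^ e1 * q2 ^ e2) = 2 * ((2 * e1).+1 * (2 * e2).+1).
Proof.
move=> q1_pr q2_pr q12 e1_gt0 e2_gt0.
have qe_gt0 q e : prime q -> 0 < q ^ e by move=> q_pr; rewrite expn_gt0 prime_gt0.
have primes_n : perm_eq (primes (q1 ^ e1 * q2 ^ e2)) [:: q1; q2].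
  apply: uniq_perm => [||q]; rewrite ?primes_uniq /= ?inE ?q12 //.
  by rewrite primesM ?qe_gt0 // !primesX // !primes_prime // !inE.
have logn_q1 : logn q1 (q1 ^ e1 * q2 ^ e2) = e1.
  by rewrite lognM ?qe_gt0 // pfactorK // lognX logn_prime // (negbTE q12) muln0 addn0.
have logn_q2 : logn q2 (q1 ^ e1 * q2 ^ e2) = e2.
  by rewrite lognM ?qe_gt0 // pfactorK // lognX logn_prime // eq_sym (negbTE q12) muln0.
rewrite /T0Tstar_exponent /Tunit_exponent (perm_size primes_n) (perm_big _ primes_n) /=.
by rewrite big_cons big_seq1 logn_q1 logn_q2 expn1.
Qed.

Lemma KT0Tstar_perfect_pfactor K q : 2 <= K -> prime q ->
  KT0Tstar_perfect K (q ^ (2 * K - 1)).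
Proof.
move=> K_ge2 q_pr; have e_gt0 : 0 < 2 * K - 1 by lia.
have n_gt1 : 1 < q ^ (2 * K - 1) by rewrite -(expn0 q) ltn_exp2l ?prime_gt1.
split=> //; split=> //; apply/eqP.
by rewrite eqn_Tdiv_Tunit_expn // T0Tstar_exponent_pfactor //; apply/eqP; lia.
Qed.

Lemma odd_double_half_pred x : odd x -> (2 * ((x - 1) %/ 2)).+1 = x.
Proof. by move=> odd_x; have := odd_double_half x; rewrite odd_x; lia. Qed.

Lemma KT0Tstar_perfect_pfactor2 q1 q2 x1 x2 :
  prime q1 -> prime q2 -> q1 != q2 -> odd x1 -> odd x2 -> 1 < x1 -> 1 < x2 ->
  KT0Tstar_perfect (x1 * x2) (q1 ^ ((x1 - 1) %/ 2) * q2 ^ ((x2 - 1) %/ 2)).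
Proof.
move=> q1_pr q2_pr q12 odd_x1 odd_x2 x1_gt1 x2_gt1.
rewrite -{1}(odd_double_half_pred odd_x1) -{1}(odd_double_half_pred odd_x2).
set e1 := (x1 - 1) %/ 2; set e2 := (x2 - 1) %/ 2.
have [e1_gt0 e2_gt0] : 0 < e1 /\ 0 < e2 by rewrite /e1 /e2; lia.
have n_gt1 : 1 < q1 ^ e1 * q2 ^ e2.
  rewrite (@leq_trans (q1 ^ e1)) ?leq_pmulr ?expn_gt0 ?prime_gt0 //.
  by rewrite -(expn0 q1) ltn_exp2l ?prime_gt1.
split; first by nia.
split=> //; apply/eqP; rewrite eqn_Tdiv_Tunit_expn //.
by rewrite T0Tstar_exponent_pfactor2 // mulnC.
Qed.

Lemma KT0Tstar_perfect_shape K n : KT0Tstar_perfect K n -> size (primes n) <= 2 ->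
  (exists2 q, prime q & n = q ^ (2 * K - 1)) \/
  (exists q1 q2 e1 e2, [/\ prime q1, prime q2, q1 != q2, 0 < e1 & 0 < e2] /\
     K = (2 * e1).+1 * (2 * e2).+1 /\ n = q1 ^ e1 * q2 ^ e2).
Proof.
move=> [_ [n_gt1 /eqP]]; rewrite eqn_Tdiv_Tunit_expn // => /eqP expE.
have logn_gt0_primes q : q \in primes n -> 0 < logn q n by rewrite logn_gt0.
case: (primes n) (primes_uniq n) (all_prime_primes n) logn_gt0_primes
  (prod_primes_logn (ltnW n_gt1)) (size_primes_gt0 n_gt1) => [|q1 [|q2 [|//]]] //=.
- rewrite andbT big_seq1 => _ q1_pr /(_ q1 (mem_head _ _)) e_gt0 n_eq _ _.
  left; exists q1 => //; rewrite n_eq; congr (_ ^ _).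
  by move: expE; rewrite {1}n_eq T0Tstar_exponent_pfactor //; lia.
rewrite mem_seq1 andbT big_cons big_seq1 => q12 /and3P[q1_pr q2_pr _] e_gt0 n_eq _ _.
right; exists q1, q2, (logn q1 n), (logn q2 n); split.
  by rewrite !e_gt0 ?inE ?eqxx ?orbT.
split=> //; move: expE; rewrite {1}n_eq T0Tstar_exponent_pfactor2 ?e_gt0 ?inE ?eqxx ?orbT //.
by lia.
Qed.

Lemma size_primes_KT0Tstar_perfect_pfactor p k n :
  prime p -> KT0Tstar_perfect (p ^ k) n -> size (primes n) <= 2.
Proof.
move=> p_pr [_ [n_gt1 /eqP]]; rewrite eqn_Tdiv_Tunit_expn // => /eqP.
rewrite /T0Tstar_exponent /Tunit_exponent leqNgt.
have e_gt0 : {in primes n, forall q, 0 < logn q n} by move=> q; rewrite logn_gt0.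
case: (primes n) e_gt0 => [|q1 [|q2 [|q3 s]]] //= e_gt0.
set c := 2 ^ (size s).+2; set G := \prod_(q <- _) _ => expE.
have four_dvd_c : 4 %| c by rewrite (dvdn_exp2l 2 (_ : 2 <= (size s).+2)).
have p_eq2 : p = 2.
  have : 2 * 2 %| p ^ k * 2 by rewrite -expE dvdn_mulr.
  rewrite dvdn_pmul2r // Euclid_dvdX // => /andP[].
  by rewrite dvdn_prime2 // => /eqP.
have odd_G : odd G.
  apply: (big_ind odd) => // [x y odd_x odd_y | q _]; first by rewrite oddM odd_x.
  by rewrite /= oddM oddX.
have G_gt1 : 1 < G.
  rewrite /G big_cons (leq_trans _ (leq_pmulr _ (prodn_gt0 _))) //.
  by rewrite ltnS muln_gt0 expn_gt0 e_gt0 ?mem_head.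
have G_dvd : G %| 2 ^ k.+1 by rewrite expnSr -{1}p_eq2 -expE dvdn_mull.
have [[|j] _ G_eq] := dvdn_pfactor _ _ (isT : prime 2) G_dvd.
  by rewrite G_eq in G_gt1.
by rewrite G_eq oddX in odd_G.
Qed.

Lemma pfactor_mul_eq p k x y : prime p -> x * y = p ^ k ->
  exists a b, [/\ x = p ^ a, y = p ^ b & a + b = k].
Proof.
move=> p_pr xy_eq.
have [a _ x_eq] : exists2 a, a <= k & x = p ^ a.
  by apply/(dvdn_pfactor _ _ p_pr); rewrite -xy_eq dvdn_mulr.
have [b _ y_eq] : exists2 b, b <= k & y = p ^ b.
  by apply/(dvdn_pfactor _ _ p_pr); rewrite -xy_eq dvdn_mull.
exists a, b; split=> //; apply/eqP.
by rewrite -(eqn_exp2l _ _ (prime_gt1 p_pr)) expnD -x_eq -y_eq xy_eq.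
Qed.

Theorem mainTheorem8 (k p : nat) (hk : 0 < k) (hp : prime p) :
  (forall p1 : nat, prime p1 ->
     KT0Tstar_perfect (p ^ k) (p1 ^ (2 * p ^ k - 1)))
  /\
  (2 <= k -> odd p ->
   forall p1 p2 a1 a2 : nat, prime p1 -> prime p2 -> p1 != p2 ->
     0 < a1 -> 0 < a2 -> a1 + a2 = k ->
     KT0Tstar_perfect (p ^ k)
       (p1 ^ ((p ^ a1 - 1) %/ 2) * p2 ^ ((p ^ a2 - 1) %/ 2)))
  /\
  (forall n : nat, 1 < n -> KT0Tstar_perfect (p ^ k) n ->
     (exists p1, prime p1 /\ n = p1 ^ (2 * p ^ k - 1))
     \/
     (odd p /\ exists p1 p2 a1 a2 : nat,
        [/\ prime p1, prime p2, p1 != p2, 0 < a1 & 0 < a2] /\ a1 + a2 = k /\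
        n = p1 ^ ((p ^ a1 - 1) %/ 2) * p2 ^ ((p ^ a2 - 1) %/ 2))).
Proof.
have pX_gt1 a : 0 < a -> 1 < p ^ a.
  by move=> a_gt0; apply: leq_trans (prime_gt1 hp) (leq_pexp2l (prime_gt0 hp) a_gt0).
split; first by move=> p1; apply: KT0Tstar_perfect_pfactor; apply: pX_gt1.
split=> [_ odd_p p1 p2 a1 a2 p1_pr p2_pr p12 a1_gt0 a2_gt0 <- | n _ n_perfect].
  by rewrite expnD; apply: KT0Tstar_perfect_pfactor2; rewrite ?oddX ?odd_p ?orbT ?pX_gt1.
have [[q q_pr ->] | [q1 [q2 [e1 [e2 [[q1_pr q2_pr q12 e1_gt0 e2_gt0] [K_eq ->]]]]]]] :=
  KT0Tstar_perfect_shape n_perfect (size_primes_KT0Tstar_perfect_pfactor hp n_perfect).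
  by left; exists q.
have [a1 [a2 [x1_eq x2_eq sum_a]]] := pfactor_mul_eq hp (esym K_eq).
have a1_gt0 : 0 < a1 by case: a1 x1_eq {sum_a} => [|//]; rewrite expn0; lia.
have a2_gt0 : 0 < a2 by case: a2 x2_eq {sum_a} => [|//]; rewrite expn0; lia.
right; split.
  by move: (congr1 odd x1_eq); rewrite /= oddM oddX eqn0Ngt a1_gt0 /= => <-.
exists q1, q2, a1, a2; do 2!split=> //.
by rewrite -x1_eq -x2_eq; congr (_ ^ _ * _ ^ _); lia.
Qed.
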